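(* (i) For each $m\in\{1,\dots,M\}$ and every measurable $q:\mathbb R^{p-\#\mathcal X(m)}\to\mathbb R$ with $\mathbb E|q(\boldsymbol X_{-\mathcal X(m)})|<\infty$, almost surely $$|\mathbb E q(\boldsymbol X_{-\mathcal X(m)})-\mathbb E(q(\boldsymbol X_{-\mathcal X(m)})\mid\boldsymbol X_{\mathcal X(m)})|\le\frac{\delta_0\,\mathbb E|q(\boldsymbol X_{-\mathcal X(m)})|}{\min_{1\le m'\le M,\ l\in\mathcal X(m'),\ a\in\{0,1\}}\mathbb P(X_l=a)}.$$ (ii) For all distinct $l,k\in\{1,\dots,M\}$ and every measurable $q:\mathbb R^{p-\#\mathcal X(l)}\to\mathbb R$, almost surely $$|\mathbb E(q(\boldsymbol X_{-\mathcal X(l)})\mid\boldsymbol X_{\mathcal X(k)},\boldsymbol X_{\mathcal X(l)})-\mathbb E(q(\boldsymbol X_{-\mathcal X(l)})\mid\boldsymbol X_{\mathcal X(k)})|\le\frac{2\delta_0\,\mathbb E|q(\boldsymbol X_{-\mathcal X(l)})|}{p_{\min}}.$$ (iii) For all distinct $l,k\in\{1,\dots,M\}$ and every measurable $q:\mathbb R^{p-\#\mathcal X(\{l,k\})}\to\mathbb R$, almost surely $$|\mathbb E(q(\boldsymbol X_{-\mathcal X(\{k,l\})})\mid\boldsymbol X_{\mathcal X(k)},\boldsymbol X_{\mathcal X(l)})-\mathbb E q(\boldsymbol X_{-\mathcal X(\{k,l\})})|\le\frac{3\delta_0\,\mathbb E|q(\boldsymbol X_{-\mathcal X(\{k,l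\})})|}{p_{\min}}.$$
   Context: Setup. $\boldsymbol X=(X_1,\dots,X_p)^\top$ is a random vector in $\{0,1\}^p$; $\{1,\dots,p\}$ is partitioned into disjoint nonempty feature groups $\mathcal X(1),\dots,\mathcal X(M)$; a group is either a single feature or has $\#\mathcal X(m)>1$ and consists of one-hot indicators ($\sum_{j\in\mathcal X(m)}\mathbf 1\{X_j=1\}=1$ a.s.). $\mathcal X(J)=\bigcup_{m\in J}\mathcal X(m)$; $\boldsymbol X_H=(X_j)_{j\in H}$, $\boldsymbol X_{-H}=(X_j)_{j\notin H}$. Conditional expectations/probabilities given null events are set to $0$. $p_{\min}=\min_{1\le l<k\le M,\,i\in\mathcal X(l),\,j\in\mathcal X(k),\,(a,b)\in\{0,1\}^2}\mathbb P(X_i=a,X_j=b)>0$; $\delta_0=\max_{1\le m\le M}\inf\{\delta\ge0:\mathbb P(\max_{i\in\mathcal X(m)}|\mathbb P(X_i=1\mid\boldsymbol X_{-\mathcal X(m)})-\mathbb P(X_i=1)|\le\delta)=1\}$. *)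

From HB Require Import structures.
From mathcomp Require Import all_boot all_order all_algebra.
From mathcomp Require Import classical_sets reals.
Set Implicit Arguments. Unset Strict Implicit. Unset Printing Implicit Defensive.
Import Order.TTheory GRing.Theory Num.Theory.
Local Open Scope ring_scope.

(* Outcomes of X = (X_1,...,X_p) in {0,1}^p, features indexed by 'I_p. *)
Notation state p := {ffun 'I_p -> bool}.

Section Defs.
Variables (R : realType) (p M : nat).
Implicit Types (P : {ffun state p -> R}) (H : {set 'I_p}) (x y : state p).

Definition is_pmf P := (forall x, 0 <= P x) /\ \sum_x P x = 1.

Definition prob P (A : pred (state p)) : R := \sum_(x | A x) P x.

Definition expect P (f : state p -> R) : R := \sum_x P x * f x.

Definition agree H x y : bool := [forall j in H, x j == y j].

(* E(f(X) | X_H) evaluated at the outcome x; 0 on null conditioning events *)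
Definition cond_exp P (f : state p -> R) H x : R :=
  let den := \sum_(y | agree H x y) P y in
  if den == 0 then 0 else (\sum_(y | agree H x y) P y * f y) / den.

(* X_{-H}: the coordinates outside H (coordinates in H are blanked to 0) *)
Definition dropX H x : state p := [ffun j => if j \in H then false else x j].

Definition fgroup (g : 'I_p -> 'I_M) (m : 'I_M) : {set 'I_p} := [set j | g j == m].

Definition delta0 (g : 'I_p -> 'I_M) P : R :=
  \big[Num.max/0]_(m : 'I_M)
    inf [set d : R | 0 <= d /\
      prob P [pred x : state p | \big[Num.max/0]_(i | g i == m)
                 `|cond_exp P (fun y => (y i)%:R) (~: fgroup g m) x
                   - prob P (fun y => y i)| <= d] = 1].

(* p_min = min over features i, j in distinct groups and a, b of
   P(X_i = a, X_j = b)  (the empty minimum, M <= 1, is taken as 1) *)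
Definition pmin (g : 'I_p -> 'I_M) P : R :=
  \big[Num.min/1]_(i : 'I_p) \big[Num.min/1]_(j | g i != g j)
    \big[Num.min/1]_(a : bool) \big[Num.min/1]_(b : bool)
      prob P [pred x : state p | (x i == a) && (x j == b)].

Definition marg_min P : R :=
  \big[Num.min/1]_(l : 'I_p) \big[Num.min/1]_(a : bool) prob P [pred x : state p | x l == a].

(* standing assumptions on the groups: nonempty, and each group is a single
   feature or a block of one-hot indicators (exactly one equals 1 a.s.) *)
Definition groups_ok (g : 'I_p -> 'I_M) P :=
  forall m : 'I_M, (exists j, g j = m) /\
    (#|fgroup g m| = 1%N \/
     prob P [pred x : state p | #|[set j in fgroup g m | x j]| == 1%N] = 1).

End Defs.

From HB Require Import structures.
From mathcomp Require Import all_boot all_order all_algebra.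
From mathcomp Require Import classical_sets reals.
From mathcomp Require Import ring.
Import Order.TTheory GRing.Theory Num.Theory.
Local Open Scope ring_scope.
Set Implicit Arguments. Unset Strict Implicit.

(* For an event X_H = x_H of probability pi and a Q that depends only on
   X_{-H}, the tower property gives E(Q | X_H = x_H) = E(Q c) / pi with
   c = P(X_H = x_H | X_{-H}), hence E Q - E(Q | X_H) = E(Q (pi - c)) / pi, of
   size at most d E|Q| / pi when |c - pi| <= d on the support.  Running the
   same expansion on numerator and denominator of E(Q | X_K, X_L) against
   E(Q | X_K) costs 2 d E|Q| / pi.  Since each group is a single feature or a
   one-hot block, X_{X(m)} = x_{X(m)} is a.s. a single-feature event
   {X_i = a}; so d can be taken to be delta0, and pi is bounded below by
   marg_min or p_min.  Part (iii) is the triangle inequality through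
   E(Q | X_K), combining the two bounds. *)

Section Agree.
Variable p : nat.
Implicit Types (H K L : {set 'I_p}) (x y z : state p).

Lemma agree_refl H x : agree H x x.
Proof. by apply/forall_inP. Qed.

Lemma agree_sym H x y : agree H x y = agree H y x.
Proof. by apply/forall_inP/forall_inP => A j /A; rewrite eq_sym. Qed.

Lemma agree_trans H x y z : agree H x y -> agree H y z -> agree H x z.
Proof.
move=> /forall_inP A /forall_inP B; apply/forall_inP => j jH.
by rewrite (eqP (A j jH)) (eqP (B j jH)).
Qed.

Lemma agreeS H K x y : H \subset K -> agree K x y -> agree H x y.
Proof.
by move=> /fintype.subsetP HK /forall_inP A; apply/forall_inP => j /HK /A.
Qed.

Lemma agreeU K L x y : agree (K :|: L) x y = agree K x y && agree L x y.
Proof.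
apply/idP/andP => [A | [/forall_inP A /forall_inP B]].
  by split; apply: agreeS A; rewrite ?finset.subsetUl ?finset.subsetUr.
by apply/forall_inP => j; rewrite finset.in_setU => /orP[/A | /B].
Qed.

Lemma agree_classE H x y : agree H x y -> agree H x =1 agree H y.
Proof.
move=> Axy z; apply/idP/idP => [|/(agree_trans Axy)] //.
by apply: agree_trans; rewrite agree_sym.
Qed.

End Agree.

Section Expectation.
Variables (R : realType) (p : nat) (P : {ffun state p -> R}).
Implicit Types (K : {set 'I_p}) (x y : state p) (f h : state p -> R).

Lemma eq_expect f h : f =1 h -> expect P f = expect P h.
Proof. by move=> fh; apply: eq_bigr => y _; rewrite fh. Qed.

Lemma expectD f h : expect P (fun y => f y + h y) = expect P f + expect P h.
Proof. by rewrite -big_split; apply: eq_bigr => y _; rewrite mulrDr. Qed.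

Lemma expectZ (c : R) f : expect P (fun y => c * f y) = c * expect P f.
Proof. by rewrite mulr_sumr; apply: eq_bigr => y _; rewrite mulrCA. Qed.

Lemma expectB f h : expect P (fun y => f y - h y) = expect P f - expect P h.
Proof.
rewrite (eq_expect (h := fun y => f y + (-1) * h y)) => [|y]; last by rewrite mulN1r.
by rewrite expectD expectZ mulN1r.
Qed.

Lemma probE (A : pred (state p)) : prob P A = expect P (fun y => (A y)%:R).
Proof.
rewrite /prob /expect big_mkcond /=; apply: eq_bigr => y _.
by case: (A y); rewrite ?mulr1 ?mulr0.
Qed.

Lemma cond_expE f K x :
  cond_exp P f K x = if prob P (agree K x) == 0 then 0
                     else expect P (fun y => f y * (agree K x y)%:R) / prob P (agree K x).
Proof.
rewrite /cond_exp /=; congr (if _ then _ else _ / _).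
rewrite /expect big_mkcond; apply: eq_bigr => y _.
by case: (agree K x y); rewrite ?mulr1 ?mulr0 // mulrC.
Qed.

Hypothesis pmf : is_pmf P.

Lemma pmf_ge0 y : 0 <= P y.
Proof. by case: pmf. Qed.

Lemma pmf_le0 y : P y <= 0 -> P y = 0.
Proof. by move=> Py; apply/eqP; rewrite eq_le Py pmf_ge0. Qed.

Lemma eq_expect_support f h :
  (forall y, 0 < P y -> f y = h y) -> expect P f = expect P h.
Proof.
move=> fh; apply: eq_bigr => y _.
by case: (ltrP 0 (P y)) => [/fh -> // | /pmf_le0 ->]; rewrite !mul0r.
Qed.

Lemma expect_cst (c : R) : expect P (fun=> c) = c.
Proof. by rewrite /expect -mulr_suml; case: pmf => _ ->; rewrite mul1r. Qed.

Lemma expect_ge0 f : (forall y, 0 <= f y) -> 0 <= expect P f.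
Proof. by move=> f0; apply: sumr_ge0 => y _; rewrite mulr_ge0 ?pmf_ge0. Qed.

Lemma ler_norm_expect f h :
  (forall y, 0 < P y -> `|f y| <= h y) -> `|expect P f| <= expect P h.
Proof.
move=> fh; apply: le_trans (ler_norm_sum _ _ _) _; apply: ler_sum => y _.
rewrite normrM ger0_norm ?pmf_ge0 //.
by case: (ltrP 0 (P y)) => [/fh/ler_wpM2l-> // | /pmf_le0 ->]; rewrite ?pmf_ge0 ?mul0r.
Qed.

Lemma prob_ge0 (A : pred (state p)) : 0 <= prob P A.
Proof. by apply: sumr_ge0 => y _; exact: pmf_ge0. Qed.

Lemma le_prob (A B : pred (state p)) : (forall y, A y -> B y) -> prob P A <= prob P B.
Proof.
move=> AB; rewrite !probE; apply: ler_sum => y _; rewrite ler_wpM2l ?pmf_ge0 //.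
by case: (A y) (AB y) => [-> |] //; case: (B y).
Qed.

Lemma eq_prob_support (A B : pred (state p)) :
  (forall y, 0 < P y -> A y = B y) -> prob P A = prob P B.
Proof. by move=> AB; rewrite !probE; apply: eq_expect_support => y /AB ->. Qed.

Lemma prob1P (A : pred (state p)) : prob P A = 1 <-> forall x, 0 < P x -> A x.
Proof.
have [_ P1] := pmf.
have total : prob P A + \sum_(y | ~~ A y) P y = 1 by rewrite -P1 /prob [RHS](bigID A).
split=> [PA x Px | AP].
  apply/negPn/negP => nAx; move: total; rewrite PA -[RHS]addr0 => /addrI/eqP.
  rewrite psumr_eq0 => [/allP/(_ x (mem_index_enum x))|y _]; last exact: pmf_ge0.
  by rewrite nAx gt_eqF.
rewrite -total big1 ?addr0 // => y nAy.
by apply: pmf_le0; rewrite leNgt; exact: contra (AP y) nAy.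
Qed.

Lemma pmf_le_prob_agree K x : P x <= prob P (agree K x).
Proof.
rewrite /prob (bigD1 x) ?agree_refl //= lerDl.
by apply: sumr_ge0 => y _; exact: pmf_ge0.
Qed.

Lemma prob_agree_gt0 K x : 0 < P x -> 0 < prob P (agree K x).
Proof. by move=> Px; exact: lt_le_trans Px (pmf_le_prob_agree K x). Qed.

Lemma cond_expE_support f K x : 0 < P x ->
  cond_exp P f K x = expect P (fun y => f y * (agree K x y)%:R) / prob P (agree K x).
Proof. by move=> Px; rewrite cond_expE gt_eqF ?prob_agree_gt0. Qed.

Lemma tower K f h : (forall y y', agree K y y' -> h y = h y') ->
  expect P (fun y => h y * cond_exp P f K y) = expect P (fun y => h y * f y).
Proof.
move=> hK.
pose den y := \sum_(z | agree K y z) P z.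
have expand y : P y * (h y * cond_exp P f K y) =
   \sum_z (if agree K y z then h y * P y * (P z * f z) / den y else 0).
  rewrite /cond_exp /= -big_mkcond /=.
  case: eqP => D.
    rewrite big1 => [|z _]; last by rewrite /den D invr0 !mulr0.
    by rewrite !mulr0.
  by rewrite mulr_suml !mulr_sumr; apply: eq_bigr => z _; rewrite /den; ring.
rewrite /expect (eq_bigr _ (fun y _ => expand y)) exchange_big /=.
apply: eq_bigr => z _.
transitivity (\sum_y (if agree K z y then h z * (P z * f z) / den z * P y else 0)).
  apply: eq_bigr => y _; rewrite agree_sym; case: ifP => // A.
  rewrite (hK y z); last by rewrite agree_sym.
  rewrite /den (eq_bigl _ _ (agree_classE A)).
  by rewrite (mulrAC (h z)) (mulrAC _ (P y)).
rewrite -big_mkcond /= -mulr_sumr.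
have [D|D] := eqVneq (den z) 0.
  have Pz0 : P z = 0 by apply: pmf_le0; rewrite -D; exact: pmf_le_prob_agree.
  by rewrite Pz0 !(mul0r, mulr0).
by rewrite divfK // mulrCA mulrA.
Qed.

Lemma eq_cond_exp_support f h K x :
  (forall y, 0 < P y -> f y = h y) -> cond_exp P f K x = cond_exp P h K x.
Proof.
move=> fh; rewrite !cond_expE.
by rewrite (eq_expect_support (h := fun y => h y * (agree K x y)%:R)) // => y /fh ->.
Qed.

Lemma cond_exp_cst (c : R) K x : 0 < P x -> cond_exp P (fun=> c) K x = c.
Proof.
move=> Px; rewrite cond_expE_support // expectZ -probE mulfK //.
exact/lt0r_neq0/prob_agree_gt0.
Qed.

Lemma cond_exp_1B f K x : 0 < P x ->
  cond_exp P (fun y => 1 - f y) K x = 1 - cond_exp P f K x.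
Proof.
move=> Px; rewrite !cond_expE_support //.
rewrite (eq_expect (h := fun y => (agree K x y)%:R - f y * (agree K x y)%:R)) => [|y]; last by ring.
rewrite expectB -probE; field; exact/lt0r_neq0/prob_agree_gt0.
Qed.

End Expectation.

Lemma agreeU_ind (R : nzRingType) p (K L : {set 'I_p}) (x y : state p) :
  (agree (K :|: L) x y)%:R = (agree K x y)%:R * (agree L x y)%:R :> R.
Proof. by rewrite agreeU; case: (agree K x y); rewrite ?mul1r ?mul0r. Qed.

Section Deviation.
Variables (R : realType) (p : nat) (P : {ffun state p -> R}).
Hypothesis pmf : is_pmf P.
Implicit Types (H K L : {set 'I_p}) (x y : state p) (Q : state p -> R).

Lemma expect_cond_exp_dist_le H Q x (d : R) :
  (forall y y', agree (~: H) y y' -> Q y = Q y') -> 0 < P x ->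
  (forall y, 0 < P y -> `|cond_exp P (fun z => (agree H x z)%:R) (~: H) y
                          - prob P (agree H x)| <= d) ->
  `|expect P Q - cond_exp P Q H x| <= d * expect P (fun y => `|Q y|) / prob P (agree H x).
Proof.
move=> Qdep Px dev.
set pi := prob P (agree H x).
set c := fun y => cond_exp P (fun z => (agree H x z)%:R) (~: H) y.
have pi_gt0 : 0 < pi by exact: prob_agree_gt0.
have -> : expect P Q - cond_exp P Q H x = expect P (fun y => Q y * (pi - c y)) / pi.
  rewrite cond_expE_support // -/pi -(tower pmf (fun z => (agree H x z)%:R) Qdep).
  rewrite (eq_expect P (f := fun y => Q y * (pi - c y))
                       (h := fun y => pi * Q y - Q y * c y)) => [|y]; last by ring.
  by rewrite expectB expectZ; field; exact: lt0r_neq0.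
rewrite normrM normfV (gtr0_norm pi_gt0) ler_pM2r ?invr_gt0 // -expectZ.
apply: (ler_norm_expect pmf) => y Py.
by rewrite normrM mulrC ler_wpM2r // distrC; exact: dev.
Qed.

Lemma expect_agree_centered L h x :
  (forall y y', agree (~: L) y y' -> h y = h y') ->
  expect P (fun y => h y * (agree L x y)%:R) =
  prob P (agree L x) * expect P h +
  expect P (fun y => h y * (cond_exp P (fun z => (agree L x z)%:R) (~: L) y
                            - prob P (agree L x))).
Proof.
move=> hdep; rewrite -(tower pmf _ hdep) -expectZ -expectD.
by apply: eq_expect => y; ring.
Qed.

Lemma cond_expU_dist_le K L Q x (d : R) :
  (forall y y', agree (~: L) y y' -> Q y = Q y') -> K \subset ~: L -> 0 < P x ->
  (forall y, 0 < P y -> `|cond_exp P (fun z => (agree L x z)%:R) (~: L) y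
                          - prob P (agree L x)| <= d) ->
  `|cond_exp P Q (K :|: L) x - cond_exp P Q K x|
     <= 2 * d * expect P (fun y => `|Q y|) / prob P (agree (K :|: L) x).
Proof.
(* Expanding numerator and denominator of E(Q | X_{K u L}) around pi times
   their X_K-analogues S and Pk leaves the error terms E1 and E2, each of size
   at most d times E|Q| resp. Pk. *)
move=> Qdep KL Px dev.
have d0 : 0 <= d := le_trans (normr_ge0 _) (dev x Px).
set pi := prob P (agree L x).
set e := fun y => cond_exp P (fun z => (agree L x z)%:R) (~: L) y - pi.
set iK := fun y => (agree K x y)%:R : R.
have iKdep y y' : agree (~: L) y y' -> iK y = iK y'.
  by move=> /(agreeS KL) Ayy'; rewrite /iK agree_sym (agree_classE Ayy') agree_sym.
set A := prob P (agree (K :|: L) x).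
set Pk := prob P (agree K x).
set EQ := expect P (fun y => `|Q y|).
set S := expect P (fun y => Q y * iK y).
set E1 := expect P (fun y => Q y * iK y * e y).
set E2 := expect P (fun y => iK y * e y).
have A_gt0 : 0 < A by exact: prob_agree_gt0.
have Pk_gt0 : 0 < Pk by exact: prob_agree_gt0.
have PkE : Pk = expect P iK by rewrite /Pk probE.
have N_eq : expect P (fun y => Q y * (agree (K :|: L) x y)%:R) = pi * S + E1.
  have QiKdep y y' : agree (~: L) y y' -> Q y * iK y = Q y' * iK y'.
    by move=> Ayy'; rewrite (Qdep _ _ Ayy') (iKdep _ _ Ayy').
  rewrite -(expect_agree_centered x QiKdep).
  by apply: eq_expect => y; rewrite agreeU_ind mulrA.
have A_eq : A = pi * Pk + E2.
  rewrite /A probE PkE -(expect_agree_centered x iKdep).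
  by apply: eq_expect => y; rewrite agreeU_ind.
have iK_ge0 y : 0 <= iK y by exact: ler0n.
have iK_le1 y : iK y <= 1 by rewrite /iK lern1 leq_b1.
have dev_e y : 0 < P y -> `|e y| <= d by exact: dev.
have E1_le : `|E1| <= d * EQ.
  rewrite -expectZ; apply: (ler_norm_expect pmf) => y Py.
  rewrite !normrM (ger0_norm (iK_ge0 y)) -mulrA [d * _]mulrC ler_wpM2l //.
  by rewrite -[d]mul1r ler_pM ?dev_e.
have E2_le : `|E2| <= d * Pk.
  rewrite PkE -expectZ; apply: (ler_norm_expect pmf) => y Py.
  by rewrite normrM (ger0_norm (iK_ge0 y)) mulrC ler_wpM2r ?dev_e.
have S_le : `|S| <= EQ.
  apply: (ler_norm_expect pmf) => y _.
  by rewrite normrM (ger0_norm (iK_ge0 y)) ler_piMr.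
rewrite !cond_expE_support // -/A -/Pk -/S N_eq.
have -> : (pi * S + E1) / A - S / Pk = (Pk * E1 - S * E2) / (A * Pk).
  by rewrite A_eq; field; rewrite -A_eq; apply/andP; split; exact: lt0r_neq0.
rewrite normrM normfV (gtr0_norm (mulr_gt0 A_gt0 Pk_gt0)).
have -> : 2 * d * EQ / A = (2 * d * EQ * Pk) / (A * Pk).
  by field; apply/andP; split; exact: lt0r_neq0.
rewrite ler_pM2r ?invr_gt0 ?mulr_gt0 //.
have -> : 2 * d * EQ * Pk = Pk * (d * EQ) + EQ * (d * Pk) by ring.
apply: le_trans (ler_normB _ _) _; rewrite !normrM (gtr0_norm Pk_gt0).
exact: lerD (ler_wpM2l (ltW Pk_gt0) E1_le) (ler_pM (normr_ge0 _) (normr_ge0 _) S_le E2_le).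
Qed.

End Deviation.

Lemma ler_wpdiv2l (R : numFieldType) (c a b : R) :
  0 <= c -> 0 < b -> b <= a -> c / a <= c / b.
Proof.
move=> c0 b0 ba; rewrite ler_wpM2l // lef_pV2 ?posrE //; exact: lt_le_trans ba.
Qed.

Lemma dropX_agree p (H K : {set 'I_p}) (y y' : state p) :
  H \subset K -> agree (~: H) y y' -> dropX K y = dropX K y'.
Proof.
move=> /fintype.subsetP HK /forall_inP A; apply/ffunP => j; rewrite !ffunE.
case: ifP => // jK; apply/eqP/A; rewrite finset.in_setC; apply: contraFN jK; exact: HK.
Qed.

Lemma onehot_cards1 p (G : {set 'I_p}) (x : state p) :
  #|[set j in G | x j]| = 1%N -> exists2 i, i \in G & {in G, forall j, x j = (j == i)}.
Proof.
move=> /eqP/cards1P [i hot]; have : i \in [set j in G | x j] by rewrite hot finset.set11.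
rewrite finset.inE => /andP[iG _]; exists i => // j jG.
by have /finset.setP/(_ j) := hot; rewrite finset.inE jG finset.in_set1.
Qed.

Section FeatureGroups.
Variables (R : realType) (p M : nat) (g : 'I_p -> 'I_M) (P : {ffun state p -> R}).
Hypotheses (pmf : is_pmf P) (gok : groups_ok g P) (pmin_gt0 : 0 < pmin g P).
Implicit Types (x y : state p) (Q : state p -> R).

Lemma in_fgroup j m : (j \in fgroup g m) = (g j == m).
Proof. by rewrite finset.inE. Qed.

(* A singleton group is its own feature; in a one-hot group the hot indicator
   of x decides the whole block. *)
Lemma agree_fgroup_feature m x : 0 < P x ->
  exists i a, g i = m /\ forall y, 0 < P y -> agree (fgroup g m) x y = (y i == a).
Proof.
move=> Px; have [_ [/eqP/cards1P [i Gi] | onehot]] := gok m.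
  have /eqP gi : g i == m by rewrite -in_fgroup Gi finset.set11.
  exists i, (x i); split=> // y _; rewrite Gi.
  apply/forall_inP/eqP => [/(_ i (finset.set11 i))/eqP -> // | xy j].
  by rewrite finset.in_set1 => /eqP ->; rewrite xy.
have hot_index y : 0 < P y ->
    exists2 i, i \in fgroup g m & {in fgroup g m, forall j, y j = (j == i)}.
  by move=> Py; apply: onehot_cards1; apply/eqP; exact: (proj1 (prob1P pmf _) onehot).
have [i iG xi] := hot_index x Px.
exists i, true; split; first by apply/eqP; rewrite -in_fgroup.
move=> y Py; have [i' i'G yi'] := hot_index y Py.
rewrite eqb_id yi' //; apply/forall_inP/eqP => [/(_ i iG) | ii' j jG].
  by rewrite xi // yi' // eqxx eq_sym eqb_id => /eqP.
by rewrite xi // yi' // ii'.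
Qed.

(* The random variable whose essential supremum over the support is the
   m-th term of [delta0]. *)
Definition feature_dev m x := \big[Num.max/0]_(i | g i == m)
  `|cond_exp P (fun y => (y i)%:R) (~: fgroup g m) x - prob P (fun y => y i)|.

Lemma delta0_ge0 : 0 <= delta0 g P.
Proof. exact: bigmax_ge_id. Qed.

Lemma feature_dev_le_delta0 m x : 0 < P x -> feature_dev m x <= delta0 g P.
Proof.
move=> Px; apply: (bigmax_sup m) => //; apply: lb_le_inf.
  exists (\big[Num.max/0]_z feature_dev m z); split; first exact: bigmax_ge_id.
  by apply/(prob1P pmf) => z _; exact: le_bigmax.
by move=> d [_ /(prob1P pmf)/(_ x Px)].
Qed.

Lemma agree_fgroup_dev_le_delta0 m x i a : g i = m ->
  (forall y, 0 < P y -> agree (fgroup g m) x y = (y i == a)) ->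
  forall y, 0 < P y ->
  `|cond_exp P (fun z => (agree (fgroup g m) x z)%:R) (~: fgroup g m) y
     - prob P (agree (fgroup g m) x)| <= delta0 g P.
Proof.
move=> gi agreeE y Py; apply: le_trans (feature_dev_le_delta0 m Py).
apply: (bigmax_sup i) => /=; first by rewrite gi.
rewrite (eq_prob_support pmf agreeE).
rewrite (eq_cond_exp_support pmf (h := fun z => (z i == a)%:R)) => [|z /agreeE -> //].
case: a {agreeE}.
  rewrite (eq_prob_support pmf (B := fun z => z i)) => [|z _]; last exact: eqb_id.
  by rewrite (eq_cond_exp_support pmf (h := fun z => (z i)%:R)) => // z _; rewrite eqb_id.
have notE (z : state p) : (z i == false)%:R = 1 - (z i)%:R :> R.
  by case: (z i); rewrite /= ?subrr ?subr0.
rewrite (eq_cond_exp_support pmf (h := fun z => 1 - (z i)%:R)) => [|z _]; last exact: notE.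
rewrite cond_exp_1B // probE (eq_expect P (h := fun z => 1 - (z i)%:R)) => [|z]; last exact: notE.
by rewrite expectB (expect_cst pmf) -probE opprB addrC subrKA distrC.
Qed.

Lemma pmin_le_prob i j (a b : bool) : g i != g j ->
  pmin g P <= prob P [pred x : state p | (x i == a) && (x j == b)].
Proof.
move=> gij; apply: (bigmin_inf i) => //; apply: (bigmin_inf j) => //.
by apply: (bigmin_inf a) => //; exact: bigmin_le.
Qed.

Lemma marg_min_le_prob l (a : bool) : marg_min P <= prob P [pred x : state p | x l == a].
Proof. by apply: (bigmin_inf l) => //; exact: bigmin_le. Qed.

Lemma marg_min_ge0 : 0 <= marg_min P.
Proof. by apply: le_bigmin => // l _; apply: le_bigmin => // a _; exact: prob_ge0. Qed.

Lemma pmin_le_marg_min i j : g i != g j -> pmin g P <= marg_min P.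
Proof.
move=> gij; apply: le_bigmin => [|l _]; first exact: bigmin_le_id.
apply: le_bigmin => [|a _]; first exact: bigmin_le_id.
have [j' glj'] : exists j', g l != g j'.
  by case: (eqVneq (g l) (g i)) => [-> | ?]; [exists j | exists i].
apply: le_trans (pmin_le_prob a true glj') _.
by apply: (le_prob pmf) => y /andP[].
Qed.

Lemma pmin_le_prob_agreeU k l x : l != k -> 0 < P x ->
  pmin g P <= prob P (agree (fgroup g k :|: fgroup g l) x).
Proof.
move=> lk Px.
have [i [a [gi agree_k]]] := agree_fgroup_feature k Px.
have [j [b [gj agree_l]]] := agree_fgroup_feature l Px.
rewrite (eq_prob_support pmf (B := [pred z : state p | (z i == a) && (z j == b)])).
  by apply: pmin_le_prob; rewrite gi gj eq_sym.
by move=> y Py; rewrite agreeU agree_k // agree_l.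
Qed.

Lemma fgroup_subset_compl k l : l != k -> fgroup g k \subset ~: fgroup g l.
Proof.
move=> lk; apply/fintype.subsetP => t; rewrite finset.in_setC !in_fgroup => /eqP ->.
by rewrite eq_sym.
Qed.

Lemma expect_cond_exp_fgroup_le m Q x :
  (forall y y', agree (~: fgroup g m) y y' -> Q y = Q y') -> 0 < P x ->
  `|expect P Q - cond_exp P Q (fgroup g m) x|
     <= delta0 g P * expect P (fun y => `|Q y|) / prob P (agree (fgroup g m) x).
Proof.
move=> Qdep Px; have [i [a [gi agreeE]]] := agree_fgroup_feature m Px.
apply: (expect_cond_exp_dist_le pmf Qdep Px); exact: agree_fgroup_dev_le_delta0 gi agreeE.
Qed.

Lemma cond_exp_fgroupU_le k l Q x : l != k ->
  (forall y y', agree (~: fgroup g l) y y' -> Q y = Q y') -> 0 < P x ->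
  `|cond_exp P Q (fgroup g k :|: fgroup g l) x - cond_exp P Q (fgroup g k) x|
     <= 2 * delta0 g P * expect P (fun y => `|Q y|) / pmin g P.
Proof.
move=> lk Qdep Px; have [j [b [gj agreeE]]] := agree_fgroup_feature l Px.
have := cond_expU_dist_le pmf Qdep (fgroup_subset_compl lk) Px
          (agree_fgroup_dev_le_delta0 gj agreeE).
move/le_trans; apply; apply: ler_wpdiv2l => //; last exact: pmin_le_prob_agreeU.
by rewrite !mulr_ge0 ?delta0_ge0 ?(expect_ge0 pmf).
Qed.

Lemma expect_cond_exp_fgroup_le_marg_min m Q x :
  (forall y y', agree (~: fgroup g m) y y' -> Q y = Q y') -> 0 < P x ->
  `|expect P Q - cond_exp P Q (fgroup g m) x|
     <= delta0 g P * expect P (fun y => `|Q y|) / marg_min P.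
Proof.
move=> Qdep Px.
have bound_ge0 : 0 <= delta0 g P * expect P (fun y => `|Q y|).
  by rewrite mulr_ge0 ?delta0_ge0 ?(expect_ge0 pmf).
case: (pickP (fun j => g j != m)) => [j gjm | in_m].
  have [i [a [gi agreeE]]] := agree_fgroup_feature m Px.
  apply: le_trans (expect_cond_exp_fgroup_le Qdep Px) _; apply: ler_wpdiv2l => //.
    by apply: lt_le_trans pmin_gt0 (pmin_le_marg_min (i := i) (j := j) _); rewrite gi eq_sym.
  by rewrite (eq_prob_support pmf agreeE); exact: marg_min_le_prob.
(* X(m) is everything: Q is constant, while [marg_min P] may vanish. *)
have Qx y : Q y = Q x.
  by apply: Qdep; apply/forall_inP => j; rewrite finset.in_setC in_fgroup in_m.
rewrite (eq_expect P (h := fun=> Q x)) // (expect_cst pmf).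
rewrite (eq_cond_exp_support pmf (h := fun=> Q x)) => [|y _]; last exact: Qx.
by rewrite (cond_exp_cst pmf) // subrr normr0 divr_ge0 ?marg_min_ge0.
Qed.

Lemma cond_exp_fgroupU_expect_le k l Q x : l != k ->
  (forall y y', agree (~: (fgroup g k :|: fgroup g l)) y y' -> Q y = Q y') -> 0 < P x ->
  `|cond_exp P Q (fgroup g k :|: fgroup g l) x - expect P Q|
     <= 3 * delta0 g P * expect P (fun y => `|Q y|) / pmin g P.
Proof.
move=> lk Qdep Px.
have Qdep_k y y' : agree (~: fgroup g k) y y' -> Q y = Q y'.
  by move=> A; apply: Qdep; apply: agreeS A; rewrite finset.setCS finset.subsetUl.
have Qdep_l y y' : agree (~: fgroup g l) y y' -> Q y = Q y'.
  by move=> A; apply: Qdep; apply: agreeS A; rewrite finset.setCS finset.subsetUr.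
set d := delta0 g P; set EQ := expect P (fun y => `|Q y|).
have pmin_le_k : pmin g P <= prob P (agree (fgroup g k) x).
  apply: le_trans (pmin_le_prob_agreeU lk Px) _.
  by apply: (le_prob pmf) => y; rewrite agreeU => /andP[].
have dev_k : `|cond_exp P Q (fgroup g k) x - expect P Q| <= d * EQ / pmin g P.
  rewrite distrC; apply: le_trans (expect_cond_exp_fgroup_le Qdep_k Px) _.
  by apply: ler_wpdiv2l; rewrite ?mulr_ge0 ?delta0_ge0 ?(expect_ge0 pmf).
have -> : 3 * d * EQ / pmin g P = 2 * d * EQ / pmin g P + d * EQ / pmin g P by ring.
apply: le_trans (ler_distD (cond_exp P Q (fgroup g k) x) _ _) _.
exact: lerD (cond_exp_fgroupU_le lk Qdep_l Px) dev_k.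
Qed.

End FeatureGroups.

Unset Implicit Arguments. Set Strict Implicit.

Theorem lemma6 (R : realType) (p M : nat) (g : 'I_p -> 'I_M)
  (P : {ffun state p -> R}) :
  is_pmf P -> groups_ok g P -> 0 < pmin g P ->
  [/\
   (* (i) *)
   forall (m : 'I_M) (q : state p -> R),
     let Q := fun y => q (dropX (fgroup g m) y) in
     prob P [pred x : state p | `|expect P Q - cond_exp P Q (fgroup g m) x|
                      <= delta0 g P * expect P (fun y => `|Q y|) / marg_min P] = 1,
   (* (ii) *)
   forall (l k : 'I_M), l != k -> forall (q : state p -> R),
     let Q := fun y => q (dropX (fgroup g l) y) in
     prob P [pred x : state p | `|cond_exp P Q (fgroup g k :|: fgroup g l) x
                        - cond_exp P Q (fgroup g k) x|
                      <= 2 * delta0 g P * expect P (fun y => `|Q y|) / pmin g P] = 1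
   &
   (* (iii) *)
   forall (l k : 'I_M), l != k -> forall (q : state p -> R),
     let Q := fun y => q (dropX (fgroup g k :|: fgroup g l) y) in
     prob P [pred x : state p | `|cond_exp P Q (fgroup g k :|: fgroup g l) x - expect P Q|
                      <= 3 * delta0 g P * expect P (fun y => `|Q y|) / pmin g P] = 1].
Proof.
move=> pmf gok pmin_gt0.
have Qdep H (q : state p -> R) y y' :
  agree (~: H) y y' -> q (dropX H y) = q (dropX H y').
  by move/(dropX_agree (fintype.subxx H)) ->.
split=> [m q Q | l k lk q Q | l k lk q Q]; apply/(prob1P pmf) => x Px /=.
- exact: (expect_cond_exp_fgroup_le_marg_min pmf gok pmin_gt0 (Qdep _ q)).
- exact: (cond_exp_fgroupU_le pmf gok pmin_gt0 lk (Qdep _ q)).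
- exact: (cond_exp_fgroupU_expect_le pmf gok pmin_gt0 lk (Qdep _ q)).
Qed.
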